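(* Let $B_n$ be the group of signed permutations of $\{\pm1,\ldots,\pm n\}$. For $\pi\in B_n$ set $\pi(0)=0$, $\mathrm{des}(\pi)=\#\{0\le i<n : \pi(i)>\pi(i+1)\}$ and $\mathrm{ides}(\pi)=\mathrm{des}(\pi^{-1})$. For $\pi$ uniformly random in $B_n$ let $X_{\mathrm{des}}=\mathrm{des}(\pi)$ and $X_{\mathrm{des}+\mathrm{ides}}=\mathrm{des}(\pi)+\mathrm{ides}(\pi)$. Then \[ \mathbb{E}(X_{\mathrm{des}+\mathrm{ides}})=n,\qquad \mathbb{V}(X_{\mathrm{des}+\mathrm{ides}}) = 2\,\mathbb{V}(X_{\mathrm{des}}) + \frac12. \]
   Context: A signed permutation is a bijection $\pi$ of $\{\pm1,\ldots,\pm n\}$ with $\pi(-i)=-\pi(i)$, written $[\pi(1),\ldots,\pi(n)]$; the convention $\pi(0)=0$ is applied to both $\pi$ and $\pi^{-1}$. *)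

From HB Require Import structures.
From mathcomp Require Import all_boot all_order all_algebra all_fingroup.
Set Implicit Arguments. Unset Strict Implicit. Unset Printing Implicit Defensive.
Import Order.TTheory GRing.Theory Num.Theory.
Local Open Scope ring_scope.

(* The ground set {+-1,...,+-n} is encoded as 'I_n * bool:
   (i, false) stands for i+1 and (i, true) stands for -(i+1). *)
Definition sval_of (n : nat) (x : 'I_n * bool) : int :=
  if x.2 then - (x.1.+1%:Z) else x.1.+1%:Z.

Definition sneg (n : nat) (x : 'I_n * bool) : 'I_n * bool := (x.1, ~~ x.2).

Definition Bn (n : nat) : {set {perm ('I_n * bool)}} :=
  [set p : {perm ('I_n * bool)} | [forall x, p (sneg x) == sneg (p x)]].

(* pi(k) as an integer for k in {0,...,n}, with the convention pi(0) = 0 *)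
Definition pival (n : nat) (p : {perm ('I_n * bool)}) (k : nat) : int :=
  match k with
  | 0 => 0
  | k'.+1 => match insub k' : option 'I_n with
             | Some j => sval_of (p (j, false))
             | None => 0
             end
  end.

Definition des (n : nat) (p : {perm ('I_n * bool)}) : nat :=
  #|[set i : 'I_n | pival p (i.+1) < pival p i]|.

Definition ides (n : nat) (p : {perm ('I_n * bool)}) : nat := des (p^-1)%g.

Definition expB (n : nat) (X : {perm ('I_n * bool)} -> nat) : rat :=
  (\sum_(p in Bn n) (X p)%:R) / #|Bn n|%:R.

Definition varB (n : nat) (X : {perm ('I_n * bool)} -> nat) : rat :=
  (\sum_(p in Bn n) ((X p)%:R - expB X) ^+ 2) / #|Bn n|%:R.

(* Write D_i(pi) for the indicator of a descent of pi at position i, so that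
   des = sum_i D_i and ides = sum_j D_j o inv.  Left multiplication by the
   simple reflection s_i toggles D_i, hence E des = n/2; inversion preserves
   the uniform distribution, so ides has the law of des.  For the covariance
   look at the four permutations pi, s_i pi, pi s_j, s_i pi s_j: unless
   pi s_j = s_i pi, exactly one sigma among them has D_i(sigma) =
   D_j(sigma^-1) = 1; if pi s_j = s_i pi, they reduce to pi and s_i pi, each
   met twice, and exactly one of the two qualifies since then
   D_i(pi) = D_j(pi^-1).  Hence 4 E[D_i (D_j o inv)] = 1 + P(pi s_j = s_i pi).
   For fixed i these probabilities sum over j to 1/n, because the values of pi
   at positions i and i+1 form a pair uniformly distributed among the pairs of
   letters of distinct absolute values (pi(1) is uniform when i = 0).  Thus
   E[des ides] = (n^2+1)/4, Cov(des, ides) = 1/4 and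
   Var(des + ides) = 2 Var(des) + 1/2. *)

From mathcomp Require Import all_boot all_order all_algebra all_fingroup.
From mathcomp Require Import zify ring.
Set Implicit Arguments. Unset Strict Implicit. Unset Printing Implicit Defensive.
Import Order.TTheory GRing.Theory Num.Theory.

Lemma sum_eq1 (T : finType) (c : T) : \sum_(d : T) (d == c : nat) = 1.
Proof. by rewrite (bigD1 c) //= eqxx big1 // => d /negbTE->. Qed.

Lemma sum_pick (T : finType) (c : T) (F : T -> nat) :
  \sum_(d : T) (c == d) * F d = F c.
Proof.
by rewrite (bigD1 c) //= eqxx mul1n big1 ?addn0 // => d; rewrite eq_sym => /negbTE->.
Qed.

Lemma sum_equal_fibres (I T : finType) (A : {pred I}) (S : pred T) (h : I -> T)
    (F : T -> nat) (K : nat) :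
  (forall i, i \in A -> S (h i)) ->
  (forall t, S t -> \sum_(i in A) (h i == t : nat) = K) ->
  (\sum_(i in A) F (h i)) * #|S| = #|A| * \sum_(t | S t) F t.
Proof.
move=> AS fibreK.
have sum_fibres G : \sum_(i in A) G (h i) = K * \sum_(t | S t) G t.
  rewrite (partition_big h S) //= big_distrr; apply: eq_bigr => t St.
  rewrite -(fibreK t St) big_mkcondr big_distrl /=; apply: eq_bigr => i _.
  by case: eqP => [->|]; rewrite ?mul1n ?mul0n.
have /= := sum_fibres (fun=> 1%N); rewrite !sum1_card sum_fibres => ->; ring.
Qed.

Section GroupSums.
Variables (gT : finGroupType) (G : {group gT}).
Local Open Scope group_scope.

Section Reindex.
Variables (R : Type) (idx : R) (op : Monoid.com_law idx).

Lemma big_mulgl g (F : gT -> R) :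
  g \in G -> \big[op/idx]_(x in G) F (g * x) = \big[op/idx]_(x in G) F x.
Proof.
by move=> Gg; rewrite [RHS](reindex_inj (mulgI g)); apply: eq_bigl => x; rewrite /= groupMl.
Qed.

Lemma big_mulgr g (F : gT -> R) :
  g \in G -> \big[op/idx]_(x in G) F (x * g) = \big[op/idx]_(x in G) F x.
Proof.
by move=> Gg; rewrite [RHS](reindex_inj (mulIg g)); apply: eq_bigl => x; rewrite /= groupMr.
Qed.

Lemma big_invg (F : gT -> R) :
  \big[op/idx]_(x in G) F x^-1 = \big[op/idx]_(x in G) F x.
Proof. by rewrite [RHS](reindex_inj invg_inj); apply: eq_bigl => x; rewrite /= groupV. Qed.

End Reindex.

Lemma sum_fibre_mulg (T : eqType) (h : gT -> T) (f : T -> T) g t :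
  g \in G -> injective f -> (forall x, h (x * g) = f (h x)) ->
  \sum_(x in G) (h x == f t : nat) = \sum_(x in G) (h x == t : nat).
Proof.
move=> Gg f_inj hM; rewrite -(big_mulgr _ _ Gg).
by apply: eq_bigr => x _; rewrite hM (inj_eq f_inj).
Qed.

End GroupSums.

Arguments big_mulgl {gT G R idx op g} F.
Arguments big_mulgr {gT G R idx op g} F.
Arguments big_invg {gT G R idx op} F.

Lemma BnP n (p : {perm 'I_n * bool}) :
  reflect (forall x, p (sneg x) = sneg (p x)) (p \in Bn n).
Proof. by rewrite inE; apply: (iffP forallP) => Bp x; apply/eqP. Qed.

Lemma group_set_Bn n : group_set (Bn n).
Proof.
apply/group_setP; split=> [|p q /BnP Bp /BnP Bq]; apply/BnP => x.
  by rewrite !perm1.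
by rewrite !permM Bp Bq.
Qed.

Canonical Bn_group n := group (group_set_Bn n).

Section SignedPermutations.
Variable n : nat.
Local Notation point := ('I_n * bool)%type.
Implicit Types (p q : {perm point}) (x y : point) (a b c i j : 'I_n) (s t : bool).
Local Open Scope group_scope.

Lemma Bn_pair p c s : p \in Bn n ->
  p (c, s) = ((p (c, false)).1, (p (c, false)).2 (+) s).
Proof.
move=> /BnP Bp; case: s; last by rewrite addbF -surjective_pairing.
by rewrite -[(c, true)]/(sneg (c, false)) Bp addbT.
Qed.

Lemma Bn_fst_eq p x y : p \in Bn n -> ((p x).1 == (p y).1) = (x.1 == y.1).
Proof.
have fstE (u v : point) : (u.1 == v.1) = (v == u) || (v == sneg u).
  by case: u v => c [] [d []]; rewrite /sneg !xpair_eqE /= ?andbT ?andbF ?orbF // eq_sym.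
by move/BnP => Bp; rewrite !fstE -Bp !(inj_eq perm_inj).
Qed.

Lemma Bn_invg_fst p c : p \in Bn n ->
  p^-1 ((p (c, false)).1, false) = (c, (p (c, false)).2).
Proof. by move=> Bp; apply: (@perm_inj _ p); rewrite permKV [RHS]Bn_pair // addbb. Qed.

Lemma sval_of_lt0 x : (sval_of x < 0)%R = x.2.
Proof. by case: x => c []; rewrite /sval_of /=; lia. Qed.

Lemma sval_of_inj : injective (@sval_of n).
Proof.
move=> [c s] [d t]; rewrite /sval_of; case: s; case: t => /= cd.
all: try lia; congr (_, _); apply: val_inj => /=; lia.
Qed.

Definition stperm_fun a b s x : point :=
  if x.1 == a then (b, x.2 (+) s) else if x.1 == b then (a, x.2 (+) s) else x.

Lemma stperm_funK a b s : involutive (stperm_fun a b s).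
Proof.
move=> [c t]; rewrite /stperm_fun /=.
case: (eqVneq c a) => [->|ca] /=; last case: (eqVneq c b) => [->|cb] /=.
- by case: eqVneq => [->|]; rewrite ?eqxx /= -addbA addbb addbF.
- by rewrite eqxx -addbA addbb addbF.
- by rewrite (negbTE ca) (negbTE cb).
Qed.

Definition stperm a b s : {perm point} := perm (can_inj (stperm_funK a b s)).

Lemma stpermE a b s x : stperm a b s x = stperm_fun a b s x.
Proof. by rewrite permE. Qed.

Lemma stpermC a b s : stperm a b s = stperm b a s.
Proof.
apply/permP => -[c t]; rewrite !stpermE /stperm_fun /=.
by case: (eqVneq c a) => [->|] //; case: eqVneq => [->|].
Qed.

Lemma stperm_Bn a b s : stperm a b s \in Bn n.
Proof.
apply/BnP => -[c t]; rewrite !stpermE /stperm_fun /sneg /=.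
by do 2?case: ifP => _; rewrite /= ?addNb.
Qed.

Lemma stperm_conj p a b s : p \in Bn n ->
  p^-1 * stperm a b s * p = stperm (p (a, false)).1 (p (b, false)).1
                              ((p (a, false)).2 (+) (p (b, false)).2 (+) s).
Proof.
move=> Bp; apply/permP => y; rewrite -(permKV p y); case: (p^-1 y) => c t.
rewrite !permM permK !stpermE /stperm_fun !Bn_fst_eq //= [p (c, t)]Bn_pair //.
case: (eqVneq c a) => [->|_] /=; last case: (eqVneq c b) => [->|_] /=.
3: by rewrite -Bn_pair.
all: rewrite Bn_pair //; congr (_, _).
all: by case: (p (a, false)).2; case: (p (b, false)).2; case: s; case: t.
Qed.

Lemma eq_stperm_at x b s a' b' s' :
  stperm x.1 b s x != x -> stperm x.1 b s x = stperm a' b' s' x ->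
  stperm x.1 b s = stperm a' b' s'.
Proof.
case: x => a t; rewrite !stpermE /stperm_fun /= eqxx => moved.
case: (eqVneq a a') => [<-|aa'] /=; first by case=> <- /addbI <-.
case: (eqVneq a b') => [<-|ab'] /=; last by move=> e; rewrite e eqxx in moved.
by case=> <- /addbI <-; apply: stpermC.
Qed.

Lemma stperm_to x x' : stperm x.1 x'.1 (x.2 (+) x'.2) x = x'.
Proof. by rewrite stpermE /stperm_fun eqxx addKb -surjective_pairing. Qed.

Lemma stperm_id a b s x : x.1 != a -> x.1 != b -> stperm a b s x = x.
Proof. by rewrite stpermE /stperm_fun => /negbTE-> /negbTE->. Qed.

Definition pred_ord (i : 'I_n) : 'I_n :=
  Ordinal (leq_ltn_trans (leq_pred i) (ltn_ord i)).

Lemma pred_ord_eq i : (pred_ord i == i) = (val i == 0%N).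
Proof. by case: i => -[|k] lt_k //; rewrite -val_eqE /= ltn_eqF. Qed.

Lemma pred_ord0 i : val i = 0%N -> pred_ord i = i.
Proof. by move=> i0; apply/eqP; rewrite pred_ord_eq i0. Qed.

(* Since [pred_ord 0 = 0], [sref 0] is the sign change of the first letter.
   As [(p * q) x = q (p x)], [sref i * p] permutes the positions of [p] and
   [p * sref i] its values. *)
Definition sref i : {perm point} := stperm (pred_ord i) i (val i == 0%N).

Lemma sref_Bn i : sref i \in Bn n.
Proof. exact: stperm_Bn. Qed.

Lemma srefK i : sref i * sref i = 1.
Proof. by apply/permP => x; rewrite permM perm1 !stpermE stperm_funK. Qed.

Lemma srefV i : (sref i)^-1 = sref i.
Proof. by apply: (mulgI (sref i)); rewrite mulgV srefK. Qed.

Lemma sref_pred i : sref i (pred_ord i, false) = (i, val i == 0%N).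
Proof. by rewrite stpermE /stperm_fun eqxx. Qed.

Lemma sref_self i : sref i (i, false) = (pred_ord i, val i == 0%N).
Proof. by rewrite stpermE /stperm_fun /= eqxx; case: eqVneq => [e|] //; rewrite -e. Qed.

Lemma sref_eq_sneg j y : (sref j y == sneg y) = (val j == 0%N) && (y.1 == j).
Proof.
case: y => c t; rewrite stpermE /stperm_fun /sneg /=.
case: (eqVneq c (pred_ord j)) => [->|_] /=; last case: (eqVneq c j) => [->|_] /=.
- by rewrite xpair_eqE eq_sym pred_ord_eq; case: (val j == 0%N); case: t.
- by rewrite xpair_eqE pred_ord_eq ?eqxx; case: (val j == 0%N); case: t.
- by rewrite xpair_eqE eqxx andbF; case: t.
Qed.

Lemma sref_snd j y : sref j y != sneg y -> (sref j y).2 = y.2.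
Proof.
rewrite sref_eq_sneg; case: y => c t /=; rewrite stpermE /stperm_fun /=.
case: (eqVneq c (pred_ord j)) => [->|_] /=; last case: (eqVneq c j) => _ //=.
  rewrite pred_ord_eq andbb.
all: by rewrite ?eqxx ?andbT; case: (val j == 0%N) => //= _; rewrite addbF.
Qed.

Lemma sref_lt j x y : x.1 != y.1 -> sref j x != y ->
  (sval_of (sref j y) < sval_of (sref j x))%R = (sval_of y < sval_of x)%R.
Proof.
case: x y => [c s] [d t]; rewrite !stpermE /stperm_fun /= -!val_eqE /=.
have := ltn_ord j; have := ltn_ord c; have := ltn_ord d.
case: (nat_of_ord c =P j.-1) => ?; case: (nat_of_ord c =P j) => ?;
case: (nat_of_ord d =P j.-1) => ?; case: (nat_of_ord d =P j) => ?;
case: (nat_of_ord j =P 0%N) => ?; case: s; case: t;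
rewrite /sval_of /= ?xpair_eqE -?val_eqE /=; lia.
Qed.

Lemma sref_moves_fst j x :
  ((sref j x).1 != x.1) = (val j != 0%N) && ((x.1 == pred_ord j) || (x.1 == j)).
Proof.
case: x => c t; rewrite stpermE /stperm_fun /=.
case: (eqVneq c (pred_ord j)) => [-> | _] /=; first by rewrite eq_sym pred_ord_eq andbT.
by case: (eqVneq c j) => [-> | _] /=; rewrite ?pred_ord_eq ?eqxx ?andbT ?andbF.
Qed.

Definition descent i p : bool := (pival p i.+1 < pival p i)%R.

Lemma des_sum p : des p = \sum_(i < n) descent i p.
Proof. by rewrite /des -sum1_card big_mkcond; apply: eq_bigr => i _; rewrite inE. Qed.

Lemma descentE i p : descent i p =
  if val i == 0%N then (sval_of (p (i, false)) < 0)%R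
  else (sval_of (p (i, false)) < sval_of (p (pred_ord i, false)))%R.
Proof.
rewrite /descent /=; case: insubP => [k _ /val_inj -> | ]; last by rewrite ltn_ord.
case: i => -[|m] lt_m //=; case: insubP => [l _ l_m | ]; last by rewrite (ltn_trans _ lt_m).
by have -> : l = pred_ord (Ordinal lt_m) by apply: val_inj.
Qed.

Lemma descent_sref i p : p \in Bn n -> descent i (sref i * p) = ~~ descent i p.
Proof.
move=> Bp; rewrite !descentE !permM sref_self sref_pred.
case: (val i =P 0%N) => [i0 | /eqP i0].
  by rewrite pred_ord0 // !sval_of_lt0 Bn_pair // addbT.
have neq : sval_of (p (i, false)) != sval_of (p (pred_ord i, false)).
  rewrite (inj_eq sval_of_inj) (inj_eq perm_inj) xpair_eqE.
  by rewrite eq_sym pred_ord_eq (negbTE i0).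
by rewrite ltNge le_eqVlt (negbTE neq).
Qed.

Definition conj_ref i j p : bool :=
  (p * sref j) (pred_ord i, false) == (sref i * p) (pred_ord i, false).

Lemma conj_refE i j p : p \in Bn n -> conj_ref i j p =
  if val i == 0%N then sref j (p (i, false)) == sneg (p (i, false))
  else sref j (p (pred_ord i, false)) == p (i, false).
Proof.
move=> /BnP Bp; rewrite /conj_ref !permM sref_pred.
by case: (val i =P 0%N) => [i0|] //; rewrite pred_ord0 // -Bp.
Qed.

(* [p^-1 * sref i * p] and [sref j] are signed transpositions, and a signed
   transposition is determined by the image of one point it moves. *)
Lemma conj_ref_comm i j p : p \in Bn n -> conj_ref i j p -> p * sref j = sref i * p.
Proof.
move=> Bp /eqP agree.
suff conj_i : p^-1 * sref i * p = sref j by rewrite -conj_i !mulgA mulgV mul1g.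
have moved : (p^-1 * sref i * p) (p (pred_ord i, false)) != p (pred_ord i, false).
  rewrite !permM permK (inj_eq perm_inj) sref_pred xpair_eqE eq_sym pred_ord_eq.
  by case: (val i == 0%N).
have at_pred :
    (p^-1 * sref i * p) (p (pred_ord i, false)) = sref j (p (pred_ord i, false)).
  by rewrite !permM permK; move: agree; rewrite !permM.
move: moved at_pred; rewrite {1 2 3}/sref stperm_conj //; exact: eq_stperm_at.
Qed.

Lemma conj_refP i j p :
  p \in Bn n -> reflect (p * sref j = sref i * p) (conj_ref i j p).
Proof.
by move=> Bp; apply: (iffP idP) => [|e]; [exact: conj_ref_comm | rewrite /conj_ref e].
Qed.

Lemma descent_mul_sref i j p : p \in Bn n -> ~~ conj_ref i j p ->
  descent i (p * sref j) = descent i p.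
Proof.
move=> Bp; rewrite conj_refE // !descentE !permM.
case: (val i =P 0%N) => [_ | /eqP i0] nconj.
  by rewrite !sval_of_lt0 sref_snd.
by apply: sref_lt; rewrite // Bn_fst_eq //= pred_ord_eq.
Qed.

Lemma sref_swap j x y : x.1 != y.1 -> sref j x = y ->
  [/\ val j != 0%N, y.2 = x.2
    & (x.1, y.1) = (pred_ord j, j) \/ (x.1, y.1) = (j, pred_ord j)].
Proof.
case: x y => [c s] [d t] /= cd; rewrite stpermE /stperm_fun /=.
case: (eqVneq c (pred_ord j)) => [cj | _] /=; last case: (eqVneq c j) => [cj | _] /=.
- case=> dj <-; subst c d; rewrite pred_ord_eq in cd.
  by rewrite (negbTE cd) addbF; split=> //; left.
- case=> dj <-; subst c d; rewrite eq_sym pred_ord_eq in cd.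
  by rewrite (negbTE cd) addbF; split=> //; right.
- by case=> dc; rewrite dc eqxx in cd.
Qed.

Lemma conj_ref_descent i j p :
  p \in Bn n -> conj_ref i j p -> descent i p = descent j p^-1.
Proof.
move=> Bp; rewrite conj_refE // !descentE; case: (val i =P 0%N) => [_ | /eqP i0].
  by rewrite sref_eq_sneg => /andP[-> /eqP <-]; rewrite Bn_invg_fst // !sval_of_lt0.
move=> /eqP swap; have [|j0 sgn adj] := sref_swap _ swap.
  by rewrite Bn_fst_eq //= pred_ord_eq.
rewrite (negbTE j0); case: adj => -[pj ij];
  [rewrite -[in RHS]pj -[in RHS]ij | rewrite -[in RHS]ij -[in RHS]pj];
  rewrite !Bn_invg_fst //; move: pj ij sgn.
all: case: (p (i, false)) => c s; case: (p (pred_ord i, false)) => d t /= -> -> ->.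
all: by move: i0 j0 => /= i0 j0; case: t; rewrite /sval_of /=; lia.
Qed.

End SignedPermutations.

Section DescentCounts.
Variable n : nat.
Local Notation point := ('I_n * bool)%type.
Implicit Types (p : {perm point}) (x y : point) (a b i j : 'I_n).

Definition bidescent i j p : bool := descent i p && descent j p^-1.

Lemma conj_ref_invg i j p : p \in Bn n -> conj_ref j i p^-1 = conj_ref i j p.
Proof.
move=> Bp; apply/(conj_refP _ _ (groupVr Bp))/(conj_refP _ _ Bp) => e.
  by apply: invg_inj; rewrite !invMg !srefV e.
by apply: invg_inj; rewrite !invMg invgK !srefV e.
Qed.

Lemma bidescent_orbit i j p : p \in Bn n ->
  bidescent i j p + bidescent i j (sref i * p)%g + bidescent i j (p * sref j)%g
    + bidescent i j (sref i * p * sref j)%g = 1 + conj_ref i j p.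
Proof.
move=> Bp; rewrite /bidescent.
have d_ip : descent i (sref i * p) = ~~ descent i p := descent_sref i Bp.
have d_pj : descent j (p * sref j)^-1 = ~~ descent j p^-1.
  by rewrite invMg srefV descent_sref ?groupV.
have [conj | nconj] := boolP (conj_ref i j p).
  have e := conj_ref_comm Bp conj.
  have -> : (sref i * p * sref j = p)%g by rewrite -e -mulgA srefK mulg1.
  rewrite -e d_pj e d_ip (conj_ref_descent Bp conj).
  by case: (descent j p^-1).
have d_pj' : descent i (p * sref j) = descent i p := descent_mul_sref Bp nconj.
have d_ip' : descent j (sref i * p)^-1 = descent j p^-1.
  by rewrite invMg srefV descent_mul_sref ?groupV // conj_ref_invg.
have d_ipj : descent i (sref i * p * sref j) = ~~ descent i p.
  by rewrite -mulgA descent_sref ?groupM ?sref_Bn // d_pj'.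
have d_ipj' : descent j (sref i * p * sref j)^-1 = ~~ descent j p^-1.
  by rewrite invMg srefV descent_sref ?groupV ?groupM ?sref_Bn // d_ip'.
rewrite d_ip d_pj d_pj' d_ip' d_ipj d_ipj'.
by case: (descent i p); case: (descent j p^-1).
Qed.

Lemma sum_descent i : 2 * \sum_(p in Bn n) descent i p = #|Bn n|.
Proof.
rewrite mul2n -addnn -{2}(big_mulgl (fun p => nat_of_bool (descent i p)) (sref_Bn i)).
rewrite -big_split -sum1_card; apply: eq_bigr => p Bp /=.
by rewrite descent_sref //; case: (descent i p).
Qed.

Lemma sum_bidescent i j :
  4 * \sum_(p in Bn n) bidescent i j p = #|Bn n| + \sum_(p in Bn n) conj_ref i j p.
Proof.
rewrite -sum1_card -big_split /=.
rewrite -(eq_bigr _ (fun p (Bp : p \in Bn n) => bidescent_orbit i j Bp)) !big_split /=.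
rewrite (big_mulgl (fun q => nat_of_bool (bidescent i j (q * sref j)%g)) (sref_Bn i)).
rewrite (big_mulgl (fun q => nat_of_bool (bidescent i j q)) (sref_Bn i)).
rewrite (big_mulgr (fun q => nat_of_bool (bidescent i j q)) (sref_Bn j)).
ring.
Qed.

Lemma Bn_fibre a x :
  \sum_(p in Bn n) (p (a, false) == x : nat)
  = \sum_(p in Bn n) (p (a, false) == (a, false) : nat).
Proof.
rewrite -{1}(stperm_to (a, false) x).
by apply: sum_fibre_mulg (stperm_Bn _ _ _) perm_inj _ => p; rewrite permM.
Qed.

Lemma Bn_fibre2 a b x y : a != b -> x.1 != y.1 ->
  \sum_(p in Bn n) ((p (a, false), p (b, false)) == (x, y) : nat)
  = \sum_(p in Bn n)
      ((p (a, false), p (b, false)) == ((a, false), (b, false)) : nat).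
Proof.
move=> ab xy; set g1 := stperm a x.1 x.2; set z := g1 (b, false).
set g := (g1 * stperm z.1 y.1 (z.2 (+) y.2))%g.
have zx : x.1 != z.1.
  by rewrite -{1}(stperm_to (a, false) x) Bn_fst_eq ?stperm_Bn.
have -> : (x, y) = (g (a, false), g (b, false)).
  by rewrite !permM (stperm_to (a, false) x) stperm_to stperm_id.
apply: (sum_fibre_mulg (h := fun p => (p (a, false), p (b, false)))
         (f := fun u => (g u.1, g u.2)) (g := g) ((a, false), (b, false)));
  [by rewrite groupM ?stperm_Bn | by move=> [u v] [u' v'] [/perm_inj-> /perm_inj->] | ].
by move=> p; rewrite !permM.
Qed.

Lemma sum_Bn_at a (F : point -> nat) :
  (\sum_(p in Bn n) F (p (a, false))) * (n * 2) = #|Bn n| * \sum_x F x.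
Proof.
have <- : #|(predT : {pred point})| = n * 2 by rewrite card_prod card_ord card_bool.
exact: (sum_equal_fibres (A := Bn n) (S := predT) (h := fun p => p (a, false)) F _
         (fun x _ => Bn_fibre a x)).
Qed.

Lemma sum_fst_eq c : \sum_(x : point) (x.1 == c : nat) = 2.
Proof.
rewrite -(pair_bigA _ (fun d (_ : bool) => (d == c : nat))) /=.
by under eq_bigr do rewrite big_bool; rewrite big_split /= sum_eq1.
Qed.

Lemma card_fst_neq : #|[pred u : point * point | u.1.1 != u.2.1]| = 4 * n * n.-1.
Proof.
rewrite -sum1_card big_mkcond /=.
rewrite -(pair_bigA _ (fun x y : point => (x.1 != y.1 : nat))) /=.
have row x : \sum_(y : point) (x.1 != y.1 : nat) = n * 2 - 2.
  have : \sum_(y : point) (x.1 != y.1 : nat) + \sum_(y : point) (y.1 == x.1 : nat) = n * 2.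
    have <- : \sum_(y : point) 1 = n * 2 by rewrite sum1_card card_prod card_ord card_bool.
    by rewrite -big_split; apply: eq_bigr => y _; rewrite eq_sym; case: eqP.
  rewrite sum_fst_eq; lia.
rewrite (eq_bigr _ (fun x _ => row x)) sum_nat_const card_prod card_ord card_bool; lia.
Qed.

Lemma sum_Bn_at2 a b (F : point -> point -> nat) : a != b ->
  (\sum_(p in Bn n) F (p (a, false)) (p (b, false))) * (4 * n * n.-1)
  = #|Bn n| * \sum_(u : point * point | u.1.1 != u.2.1) F u.1 u.2.
Proof.
move=> ab; rewrite -card_fst_neq.
apply: (sum_equal_fibres (A := Bn n) (h := fun p => (p (a, false), p (b, false)))
         (fun u => F u.1 u.2)).
  by move=> p Bp; rewrite /= Bn_fst_eq.
by move=> [x y] /= xy; apply: Bn_fibre2.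
Qed.

Lemma sum_val_eq0 : 0 < n -> \sum_(j < n) (val j == 0%N : nat) = 1.
Proof.
move=> n_gt0; rewrite -(sum_eq1 (Ordinal n_gt0)).
by apply: eq_bigr => j _; rewrite -val_eqE.
Qed.

Lemma sum_sref_sneg : 0 < n ->
  \sum_(y : point) \sum_(j < n) (sref j y == sneg y : nat) = 2.
Proof.
move=> n_gt0.
transitivity (2 * \sum_(j < n) (val j == 0%N : nat)); last by rewrite sum_val_eq0.
rewrite exchange_big big_distrr /=; apply: eq_bigr => j _.
under eq_bigr do rewrite sref_eq_sneg -mulnb.
by rewrite -big_distrr sum_fst_eq mulnC.
Qed.

Lemma sum_val_neq0 : 0 < n -> \sum_(j < n) (val j != 0%N : nat) = n.-1.
Proof.
move=> n_gt0; have : \sum_(j < n) (val j != 0%N : nat) + \sum_(j < n) (val j == 0%N : nat) = n.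
  by rewrite -big_split -[n in RHS]card_ord -sum1_card; apply: eq_bigr => j _; case: eqP.
rewrite sum_val_eq0 //; lia.
Qed.

Lemma sum_sref_moves : 0 < n ->
  \sum_(u : point * point | u.1.1 != u.2.1) \sum_(j < n) (sref j u.1 == u.2 : nat)
  = 4 * n.-1.
Proof.
move=> n_gt0; rewrite big_mkcond /= -(pair_bigA _ (fun x y : point =>
  if x.1 != y.1 then \sum_(j < n) (sref j x == y : nat) else 0)) /=.
transitivity (\sum_(j < n) \sum_(x : point) ((sref j x).1 != x.1 : nat)).
  rewrite [RHS]exchange_big /=; apply: eq_bigr => x _.
  transitivity (\sum_(y : point) \sum_(j < n) (x.1 != y.1) * (sref j x == y : nat)).
    apply: eq_bigr => y _; rewrite -big_distrr /=.
    by case: (x.1 != y.1); rewrite ?mul1n ?mul0n.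
  rewrite exchange_big; apply: eq_bigr => j _ /=.
  by under eq_bigr do rewrite mulnC; rewrite sum_pick eq_sym.
rewrite -sum_val_neq0 // big_distrr /=; apply: eq_bigr => j _.
under eq_bigr do rewrite sref_moves_fst.
case: (eqVneq (val j) 0%N) => [_ | j0] /=; first by rewrite big1.
rewrite (eq_bigr (fun x => (x.1 == pred_ord j) + (x.1 == j))) ?big_split /= ?sum_fst_eq //.
move=> x _; case: (eqVneq x.1 j) => [-> | _]; rewrite ?orbF ?addn0 //.
by rewrite eq_sym pred_ord_eq (negbTE j0).
Qed.

Lemma sum_conj_ref i : (\sum_(j < n) \sum_(p in Bn n) conj_ref i j p) * n = #|Bn n|.
Proof.
have n_gt0 : 0 < n := leq_ltn_trans (leq0n i) (ltn_ord i).
rewrite exchange_big /=; case: (val i =P 0%N) => [i0 | /eqP i0].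
  have := sum_Bn_at i (fun y => \sum_(j < n) (sref j y == sneg y : nat)).
  rewrite sum_sref_sneg // mulnA => /eqP; rewrite eqn_pmul2r // => /eqP <-.
  congr (_ * _); apply: eq_bigr => p Bp; apply: eq_bigr => j _.
  by rewrite conj_refE // i0.
have pi : pred_ord i != i by rewrite pred_ord_eq.
have n_gt1 : 0 < 4 * n.-1 by move: (ltn_ord i) i0 => /=; lia.
have := sum_Bn_at2 (fun x y => \sum_(j < n) (sref j x == y : nat)) pi.
rewrite sum_sref_moves // => counted.
apply/eqP; rewrite -(eqn_pmul2r n_gt1) -counted; apply/eqP.
have -> : \sum_(p in Bn n) \sum_(j < n) conj_ref i j p
        = \sum_(p in Bn n) \sum_(j < n)
              (sref j (p (pred_ord i, false)) == p (i, false) : nat).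
  by apply: eq_bigr => p Bp; apply: eq_bigr => j _; rewrite conj_refE // (negbTE i0).
ring.
Qed.

End DescentCounts.

Section Expectation.
Variable n : nat.
Local Notation sperm := {perm 'I_n * bool}.
Implicit Types (X Y : sperm -> nat) (i j : 'I_n).
Local Open Scope ring_scope.

Lemma card_Bn_neq0 : #|Bn n|%:R != 0 :> rat.
Proof. by rewrite pnatr_eq0 -lt0n cardG_gt0. Qed.

Lemma expB_from_sum X (c : rat) : (\sum_(p in Bn n) X p)%:R = c * #|Bn n|%:R -> expB X = c.
Proof. by rewrite /expB -natr_sum => ->; rewrite mulfK // card_Bn_neq0. Qed.

Lemma expB_sum (I : finType) (X : I -> sperm -> nat) :
  expB (fun p => \sum_i X i p)%N = \sum_i expB (X i).
Proof.
rewrite /expB -mulr_suml; congr (_ / _).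
by rewrite exchange_big; apply: eq_bigr => p _; rewrite natr_sum.
Qed.

Lemma expB_add X Y : expB (fun p => X p + Y p)%N = expB X + expB Y.
Proof.
by rewrite /expB -mulrDl -big_split; congr (_ / _); apply: eq_bigr => p _; rewrite natrD.
Qed.

Lemma expB_natmul k X : expB (fun p => k * X p)%N = k%:R * expB X.
Proof.
by rewrite /expB mulrA mulr_sumr; congr (_ / _); apply: eq_bigr => p _; rewrite natrM.
Qed.

Lemma expB_invg X : expB (fun p => X p^-1%g) = expB X.
Proof. by rewrite /expB (big_invg (fun p => (X p)%:R)). Qed.

Lemma varBE X : varB X = expB (fun p => X p ^ 2)%N - expB X ^+ 2.
Proof.
rewrite /varB; set m := expB X; rewrite [in RHS]/expB.
rewrite (eq_bigr (fun p => (X p ^ 2)%N%:R - 2 * m * (X p)%:R + m ^+ 2)); last first.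
  by move=> p _; rewrite natrX; ring.
rewrite big_split sumrB /= -mulr_sumr sumr_const -mulr_natr /m /expB.
by field; rewrite card_Bn_neq0.
Qed.

Lemma eq_expB X Y : X =1 Y -> expB X = expB Y.
Proof. by move=> XY; rewrite /expB; under eq_bigr do rewrite XY. Qed.

Lemma varB_add X Y :
  varB (fun p => X p + Y p)%N
  = varB X + varB Y + 2 * (expB (fun p => X p * Y p)%N - expB X * expB Y).
Proof.
rewrite !varBE !expB_add.
have -> : expB (fun p => (X p + Y p) ^ 2)%N = expB (fun p => X p ^ 2)%N
    + expB (fun p => Y p ^ 2)%N + 2%:R * expB (fun p => X p * Y p)%N.
  by rewrite -expB_natmul -!expB_add; apply: eq_expB => p /=; ring.
ring.
Qed.

Lemma varB_invg X : varB (fun p => X p^-1%g) = varB X.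
Proof. by rewrite !varBE (expB_invg (fun p => X p ^ 2)%N) expB_invg. Qed.

Lemma expB_descent i : expB (fun p => descent i p : nat) = 2^-1.
Proof. by apply: expB_from_sum; rewrite -(sum_descent i) natrM; field. Qed.

Lemma expB_des : expB (@des n) = n%:R / 2.
Proof.
rewrite (eq_expB (@des_sum n)) expB_sum; under eq_bigr do rewrite expB_descent.
by rewrite sumr_const card_ord -[_ *+ n]mulr_natr mulrC.
Qed.

Lemma expB_bidescent i j :
  expB (fun p => bidescent i j p : nat) = (1 + expB (fun p => conj_ref i j p : nat)) / 4.
Proof.
apply: expB_from_sum; rewrite /expB -natr_sum; apply: (@mulfI _ 4) => //.
by rewrite -natrM (sum_bidescent i j) natrD; field; rewrite card_Bn_neq0.
Qed.

Lemma sum_expB_conj_ref i : \sum_j expB (fun p => conj_ref i j p : nat) = n%:R^-1.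
Proof.
rewrite /expB -mulr_suml; under eq_bigr do rewrite -natr_sum; rewrite -natr_sum.
have := card_Bn_neq0; rewrite -(sum_conj_ref i) natrM mulf_eq0 negb_or => /andP[T0 n0].
by field; rewrite T0 n0.
Qed.

Lemma expB_des_ides : (0 < n)%N ->
  expB (fun p : sperm => des p * ides p)%N = (n%:R ^+ 2 + 1) / 4.
Proof.
move=> n_gt0.
have bidescents (p : sperm) : (des p * ides p = \sum_i \sum_j bidescent i j p)%N.
  rewrite /ides !des_sum big_distrl; apply: eq_bigr => i _.
  by rewrite big_distrr; apply: eq_bigr => j _; rewrite /= mulnb.
rewrite (eq_expB bidescents) expB_sum.
under eq_bigr => i _ do rewrite expB_sum.
under eq_bigr => i _ do under eq_bigr => j _ do rewrite expB_bidescent.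
under eq_bigr => i _ do
  rewrite -mulr_suml big_split /= sumr_const card_ord sum_expB_conj_ref.
rewrite sumr_const card_ord; field.
by rewrite pnatr_eq0 -lt0n.
Qed.

End Expectation.

Local Open Scope ring_scope.
Unset Implicit Arguments.

Theorem proposition5p7 (n : nat) (hn : (1 <= n)%N) :
  expB (fun p : {perm ('I_n * bool)} => (des p + ides p)%N) = n%:R /\
  varB (fun p : {perm ('I_n * bool)} => (des p + ides p)%N)
    = 2 * varB (fun p : {perm ('I_n * bool)} => des p) + 1 / 2.
Proof.
have E_ides : expB (fun p => ides p) = expB (@des n) := expB_invg (@des n).
have V_ides : varB (fun p => ides p) = varB (@des n) := varB_invg (@des n).
split; first by rewrite expB_add E_ides expB_des; field.
by rewrite varB_add V_ides E_ides expB_des expB_des_ides //; field.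
Qed.
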